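(* Let $E/\mathbb{Q}$ be an elliptic curve with $j$-invariant $0$ and a rational point $P$ of order $3$. Then $\widetilde E=E/\langle P\rangle$ has a rational point of order $3$ if and only if $E$ is $\mathbb{Q}$-isomorphic to $y^2+y=x^3$ and $\widetilde E$ is $\mathbb{Q}$-isomorphic to $y^2+y=x^3-7$. Moreover, $y^2+y=x^3-7$ is $\mathbb{Q}$-isomorphic to $y^2+24xy+576y=x^3$ (the curve with LMFDB label 27.a3).
   Context: $E/\langle P\rangle$ denotes the quotient of $E$ by the subgroup generated by $P$, i.e. the $3$-isogenous elliptic curve over $\mathbb{Q}$. *)

From mathcomp Require Import all_boot all_order all_algebra.
Set Implicit Arguments. Unset Strict Implicit. Unset Printing Implicit Defensive.
Import Order.TTheory GRing.Theory Num.Theory.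
Local Open Scope ring_scope.

(* A Weierstrass equation y^2 + a1 xy + a3 y = x^3 + a2 x^2 + a4 x + a6 over Q. *)
Record wcurve := WCurve { a1 : rat; a2 : rat; a3 : rat; a4 : rat; a6 : rat }.

Definition b2 (E : wcurve) : rat := a1 E ^+ 2 + 4 * a2 E.
Definition b4 (E : wcurve) : rat := 2 * a4 E + a1 E * a3 E.
Definition b6 (E : wcurve) : rat := a3 E ^+ 2 + 4 * a6 E.
Definition b8 (E : wcurve) : rat :=
  a1 E ^+ 2 * a6 E + 4 * a2 E * a6 E - a1 E * a3 E * a4 E
  + a2 E * a3 E ^+ 2 - a4 E ^+ 2.
Definition c4 (E : wcurve) : rat := b2 E ^+ 2 - 24 * b4 E.
Definition disc (E : wcurve) : rat :=
  - b2 E ^+ 2 * b8 E - 8 * b4 E ^+ 3 - 27 * b6 E ^+ 2 + 9 * b2 E * b4 E * b6 E.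
Definition elliptic (E : wcurve) : Prop := disc E != 0.
Definition jinv (E : wcurve) : rat := c4 E ^+ 3 / disc E.

(* Rational points: None is the point at infinity O. *)
Definition point := option (rat * rat).

Definition on_curve (E : wcurve) (P : point) : Prop :=
  match P with
  | None => True
  | Some (x, y) =>
      y ^+ 2 + a1 E * x * y + a3 E * y
      = x ^+ 3 + a2 E * x ^+ 2 + a4 E * x + a6 E
  end.

(* Group law (Silverman, Algorithm III.2.3). *)
Definition padd (E : wcurve) (P Q : point) : point :=
  match P, Q with
  | None, _ => Q
  | _, None => P
  | Some (x1, y1), Some (x2, y2) =>
      if (x1 == x2) && (y1 + y2 + a1 E * x2 + a3 E == 0) then None
      else
        let: (l, n) :=
          if x1 != x2 then
            ((y2 - y1) / (x2 - x1), (y1 * x2 - y2 * x1) / (x2 - x1))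
          else
            ((3 * x1 ^+ 2 + 2 * a2 E * x1 + a4 E - a1 E * y1)
               / (2 * y1 + a1 E * x1 + a3 E),
             (- x1 ^+ 3 + a4 E * x1 + 2 * a6 E - a3 E * y1)
               / (2 * y1 + a1 E * x1 + a3 E)) in
        let x3 := l ^+ 2 + a1 E * l - a2 E - x1 - x2 in
        Some (x3, - (l + a1 E) * x3 - n - a3 E)
  end.

Definition order3 (E : wcurve) (P : point) : Prop :=
  on_curve E P /\ P <> None /\ padd E (padd E P P) P = None.

(* Velu's formulas for the quotient of E by the subgroup {O, P, -P}
   generated by a point P of order 3 (no 2-torsion; one representative P). *)
Definition velu3 (E : wcurve) (P : point) : wcurve :=
  match P with
  | None => E
  | Some (xq, yq) =>
      let gx := 3 * xq ^+ 2 + 2 * a2 E * xq + a4 E - a1 E * yq in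
      let gy := - 2 * yq - a1 E * xq - a3 E in
      let t := 2 * gx - a1 E * gy in
      let u := gy ^+ 2 in
      let w := u + xq * t in
      WCurve (a1 E) (a2 E) (a3 E) (a4 E - 5 * t)
             (a6 E - (a1 E ^+ 2 + 4 * a2 E) * t - 7 * w)
  end.

(* Q-isomorphism of Weierstrass equations: a change of variables
   x = u^2 x' + r, y = u^3 y' + s u^2 x' + t with u, r, s, t in Q, u != 0
   (Silverman, Table III.3.1); E' is the transformed curve. *)
Definition isoQ (E E' : wcurve) : Prop :=
  exists u r s t : rat, u != 0 /\
    u * a1 E' = a1 E + 2 * s /\
    u ^+ 2 * a2 E' = a2 E - s * a1 E + 3 * r - s ^+ 2 /\
    u ^+ 3 * a3 E' = a3 E + r * a1 E + 2 * t /\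
    u ^+ 4 * a4 E' = a4 E - s * a3 E + 2 * r * a2 E - (t + r * s) * a1 E
                     + 3 * r ^+ 2 - 2 * s * t /\
    u ^+ 6 * a6 E' = a6 E + r * a4 E + r ^+ 2 * a2 E + r ^+ 3 - t * a3 E
                     - t ^+ 2 - r * t * a1 E.

Definition E0 : wcurve := WCurve 0 0 1 0 0.
Definition E7 : wcurve := WCurve 0 0 1 0 (-7).
Definition E27a3 : wcurve := WCurve 24 0 576 0 0.

From mathcomp Require Import all_boot all_order all_algebra.
From mathcomp Require Import ring lra zify.
Import Order.TTheory GRing.Theory Num.Theory.
Local Open Scope ring_scope.

(* Sending P to (0, 0) with horizontal tangent puts E in the form
   y^2 + a x y + b y = x^3, and Velu's formulas then give the quotient
   y^2 + a x y + b y = x^3 - 5 a b x - a^3 b - 7 b^2; j = 0 forces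
   a (a^3 - 24 b) = 0.  If a = 0, the 3-division polynomial 3 x (x^3 - 27 b^2)
   of the quotient has a root with a rational point only when b = (3 b / x)^3 is
   a cube, and scaling by the cube root of b identifies the two curves with
   y^2 + y = x^3 and y^2 + y = x^3 - 7.  If a^3 = 24 b, scaling to a = 1 leaves
   the 3-division polynomial (3 x + 1) (192 x^3 - 72 x - 17) / 192, whose cubic
   factor has no rational root and whose root -1/3 is not the abscissa of a
   rational point. *)

Definition tangent_num (E : wcurve) (x y : rat) : rat :=
  3 * x ^+ 2 + 2 * a2 E * x + a4 E - a1 E * y.
Definition tangent_den (E : wcurve) (x y : rat) : rat := 2 * y + a1 E * x + a3 E.
(* The 3-division polynomial (Silverman, Exercise 3.7). *)
Definition psi3 (E : wcurve) (x : rat) : rat :=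
  3 * x ^+ 4 + b2 E * x ^+ 3 + 3 * b4 E * x ^+ 2 + 3 * b6 E * x + b8 E.

Lemma on_curve_a6 {E x y} : on_curve E (Some (x, y)) ->
  a6 E = y ^+ 2 + a1 E * x * y + a3 E * y - x ^+ 3 - a2 E * x ^+ 2 - a4 E * x.
Proof. by move=> /= ->; ring. Qed.

Lemma tangent_den_sqr {E x y} : on_curve E (Some (x, y)) ->
  tangent_den E x y ^+ 2 = 4 * x ^+ 3 + b2 E * x ^+ 2 + 2 * b4 E * x + b6 E.
Proof. by move/on_curve_a6; rewrite /tangent_den /b2 /b4 /b6 => ->; ring. Qed.

Lemma tangent_psi3 {E x y} : on_curve E (Some (x, y)) ->
  tangent_num E x y ^+ 2 + a1 E * tangent_num E x y * tangent_den E x y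
  - (a2 E + 3 * x) * tangent_den E x y ^+ 2 = - psi3 E x.
Proof.
by move/on_curve_a6; rewrite /tangent_num /tangent_den /psi3 /b2 /b4 /b6 /b8 => ->; ring.
Qed.

Lemma order3P E x y : order3 E (Some (x, y)) <->
  [/\ on_curve E (Some (x, y)), tangent_den E x y != 0 & psi3 E x = 0].
Proof.
rewrite /order3 /padd eqxx /=.
have -> : y + y + a1 E * x + a3 E = tangent_den E x y by rewrite /tangent_den; ring.
rewrite -/(tangent_num E x y) -/(tangent_den E x y).
case: (tangent_den E x y =P 0) => [_ | /eqP hd]; first by split=> [[_ []] | []].
set l := tangent_num E x y / tangent_den E x y.
set x3 := l ^+ 2 + a1 E * l - a2 E - x - x.
set y3 := - (l + a1 E) * x3 - _ - a3 E.
have x3E (hon : on_curve E (Some (x, y))) : x3 = x - psi3 E x / tangent_den E x y ^+ 2.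
  by rewrite -[psi3 E x]opprK -(tangent_psi3 hon) /x3 /l; field.
have y3E (hon : on_curve E (Some (x, y))) : x3 = x -> y3 + y + a1 E * x + a3 E = 0.
  move=> hx3; rewrite /y3 hx3 /l (on_curve_a6 hon) /tangent_num.
  by move: hd; rewrite /tangent_den => hd; field.
split=> [[hon [_]] | [hon _ hpsi]].
  case: ifP => [/andP [/eqP hx3 _] _ | _]; last by case: ifP.
  split=> //; move/eqP: hx3; rewrite x3E // -subr_eq0 addrAC subrr add0r oppr_eq0.
  by rewrite mulf_eq0 invr_eq0 expf_eq0 (negbTE hd) andbF orbF => /eqP.
have hx3 : x3 = x by rewrite x3E // hpsi mul0r subr0.
by rewrite hx3 eqxx y3E ?eqxx.
Qed.

(* The curve E such that x = u^2 x' + r, y = u^3 y' + s u^2 x' + t maps the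
   equation of E' onto that of E, i.e. isoQ E E' with witnesses u r s t. *)
Definition chg_curve (E : wcurve) (u r s t : rat) : wcurve :=
  let a1' := u * a1 E - 2 * s in
  let a2' := u ^+ 2 * a2 E + s * a1' - 3 * r + s ^+ 2 in
  let a3' := u ^+ 3 * a3 E - r * a1' - 2 * t in
  let a4' := u ^+ 4 * a4 E + s * a3' - 2 * r * a2' + (t + r * s) * a1'
             - 3 * r ^+ 2 + 2 * s * t in
  let a6' := u ^+ 6 * a6 E - r * a4' - r ^+ 2 * a2' - r ^+ 3 + t * a3'
             + t ^+ 2 + r * t * a1' in
  WCurve a1' a2' a3' a4' a6'.

Lemma isoQ_chg E E' :
  isoQ E E' <-> exists u r s t, u != 0 /\ E = chg_curve E' u r s t.
Proof.
split=> [[u [r [s [t [hu [h1 [h2 [h3 [h4 h6]]]]]]]]] | [u [r [s [t [hu ->]]]]]].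
  exists u, r, s, t; split=> //.
  case: E h1 h2 h3 h4 h6 => e1 e2 e3 e4 e6 /= h1 h2 h3 h4 h6.
  by rewrite /chg_curve /= h1 h2 h3 h4 h6; congr WCurve; ring.
by exists u, r, s, t; rewrite /=; do !split=> //; ring.
Qed.

Lemma isoQ_sym {E E'} : isoQ E E' -> isoQ E' E.
Proof.
move/isoQ_chg=> [u [r [s [t [hu ->]]]]]; apply/isoQ_chg.
exists u^-1, (- r / u ^+ 2), (- s / u), ((r * s - t) / u ^+ 3); split.
  by rewrite invr_eq0.
by case: E' => e1 e2 e3 e4 e6; rewrite /chg_curve /=; congr WCurve; field.
Qed.

Lemma isoQ_trans {E E' E''} : isoQ E E' -> isoQ E' E'' -> isoQ E E''.
Proof.
move/isoQ_chg=> [u [r [s [t [hu ->]]]]] /isoQ_chg [v [r' [s' [t' [hv ->]]]]].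
apply/isoQ_chg; exists (u * v), (r + u ^+ 2 * r'), (s + u * s'),
  (t + u ^+ 3 * t' + s * u ^+ 2 * r'); split; first by rewrite mulf_neq0.
by case: E'' => e1 e2 e3 e4 e6; rewrite /chg_curve /=; congr WCurve; ring.
Qed.

Lemma isoQ_transl {E E' F} : isoQ E E' -> isoQ E F <-> isoQ E' F.
Proof. by move=> iso; split; apply: isoQ_trans; [exact: isoQ_sym|]. Qed.

Lemma c4_chg E u r s t : c4 (chg_curve E u r s t) = u ^+ 4 * c4 E.
Proof. by rewrite /c4 /b2 /b4 /=; ring. Qed.

Lemma disc_chg E u r s t : disc (chg_curve E u r s t) = u ^+ 12 * disc E.
Proof. by rewrite /disc /b2 /b4 /b6 /b8 /=; ring. Qed.

Lemma isoQ_elliptic {E E'} : isoQ E E' -> elliptic E -> elliptic E'.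
Proof.
move/isoQ_sym/isoQ_chg=> [u [r [s [t [hu ->]]]]].
by rewrite /elliptic disc_chg => hD; rewrite mulf_neq0 ?expf_neq0.
Qed.

Lemma isoQ_jinv {E E'} : isoQ E E' -> jinv E = jinv E'.
Proof.
move/isoQ_chg=> [u [r [s [t [hu ->]]]]].
rewrite /jinv c4_chg disc_chg exprMn -exprM.
have [->|hD] := eqVneq (disc E') 0; first by rewrite mulr0 !invr0 !mulr0.
by field; rewrite hD hu.
Qed.

Definition chg_point (u r s t : rat) (P : point) : point :=
  if P is Some (x, y) then Some (u ^+ 2 * x + r, u ^+ 3 * y + s * u ^+ 2 * x + t)
  else None.

Lemma on_curve_chg E u r s t P :
  on_curve E P -> on_curve (chg_curve E u r s t) (chg_point u r s t P).
Proof. by case: P => [[x y] /on_curve_a6 h6 | //] /=; rewrite h6; ring. Qed.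

Lemma tangent_den_chg E u r s t x y :
  tangent_den (chg_curve E u r s t) (u ^+ 2 * x + r) (u ^+ 3 * y + s * u ^+ 2 * x + t)
  = u ^+ 3 * tangent_den E x y.
Proof. by rewrite /tangent_den /=; ring. Qed.

Lemma psi3_chg E u r s t x :
  psi3 (chg_curve E u r s t) (u ^+ 2 * x + r) = u ^+ 8 * psi3 E x.
Proof. by rewrite /psi3 /b2 /b4 /b6 /b8 /=; ring. Qed.

Lemma order3_chg E u r s t P : u != 0 ->
  order3 E P -> order3 (chg_curve E u r s t) (chg_point u r s t P).
Proof.
move=> hu; case: P => [[x y] /order3P [hon hd hpsi] | [_ []]] //.
apply/order3P; split; first exact: (@on_curve_chg E u r s t (Some (x, y)) hon).
  by rewrite tangent_den_chg mulf_neq0 ?expf_neq0.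
by rewrite psi3_chg hpsi mulr0.
Qed.

Lemma isoQ_has_order3 {E E'} : isoQ E E' ->
  (exists P, order3 E P) <-> (exists P, order3 E' P).
Proof.
have transport F F' : isoQ F F' -> (exists P, order3 F' P) -> exists P, order3 F P.
  by move/isoQ_chg=> [u [r [s [t [hu ->]]]]] [P hP]; exists (chg_point u r s t P); exact: order3_chg.
by move=> iso; split; apply: transport => //; exact: isoQ_sym.
Qed.

Lemma velu3_chg E u r s t P :
  velu3 (chg_curve E u r s t) (chg_point u r s t P) = chg_curve (velu3 E P) u r s t.
Proof. by case: P => [[x y]|] //; rewrite /velu3 /chg_curve /=; congr WCurve; ring. Qed.

(* Tate normal form: (0, 0) has order 3 as soon as b != 0. *)
Definition tate3 (a b : rat) : wcurve := WCurve a 0 b 0 0.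
Definition tate3_velu (a b : rat) : wcurve :=
  WCurve a 0 b (- 5 * (a * b)) (- (a ^+ 3 * b) - 7 * b ^+ 2).

Lemma velu3_tate3 a b : velu3 (tate3 a b) (Some (0, 0)) = tate3_velu a b.
Proof. by rewrite /velu3 /tate3_velu /=; congr WCurve; ring. Qed.

Lemma tate3_normal_form {E P} : order3 E P ->
  exists a b, isoQ E (tate3 a b) /\ isoQ (velu3 E P) (tate3_velu a b).
Proof.
case: P => [[x y] /order3P [hon hd hpsi] | [_ []]] //.
(* Move P to (0, 0) and turn its tangent line into y = 0. *)
set s := tangent_num E x y / tangent_den E x y.
have num_s : tangent_num E x y = s * tangent_den E x y by rewrite divfK.
clearbody s.
have a2E : a2 E = s ^+ 2 + a1 E * s - 3 * x.
  have : (s ^+ 2 + a1 E * s - a2 E - 3 * x) * tangent_den E x y ^+ 2 = 0.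
    by rewrite -oppr0 -hpsi -(tangent_psi3 hon) num_s; ring.
  move/eqP; rewrite mulf_eq0 expf_eq0 (negbTE hd) andbF orbF => /eqP slope_s.
  by rewrite -[LHS]addr0 -slope_s; ring.
have a4E : a4 E = s * tangent_den E x y - 3 * x ^+ 2 - 2 * a2 E * x + a1 E * y.
  by rewrite -num_s /tangent_num; ring.
have defP : Some (x, y) = chg_point 1 x s y (Some (0, 0)).
  by congr (Some (_, _)); ring.
have defE : E = chg_curve (tate3 (a1 E + 2 * s) (tangent_den E x y)) 1 x s y.
  move: (on_curve_a6 hon) a4E a2E; rewrite /tangent_den.
  case: E {hon hd hpsi num_s} => e1 e2 e3 e4 e6 /= -> -> ->.
  by rewrite /chg_curve /=; congr WCurve; ring.
exists (a1 E + 2 * s), (tangent_den E x y); split; apply/isoQ_chg; exists 1, x, s, y.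
  by rewrite oner_eq0 -defE.
by rewrite oner_eq0 -velu3_tate3 -velu3_chg -defP -defE.
Qed.

Lemma int_root_depressed_cubic (p q : int) (z : rat) :
  z ^+ 3 + p%:~R * z + q%:~R = 0 -> z \is a Num.int.
Proof.
move=> hz; rewrite Qint_def -absz_denq.
have hnd : numq z ^+ 3 = denq z * - (p * numq z * denq z + q * denq z ^+ 2).
  apply: (@intr_inj rat); rewrite !(rmorphN, rmorphM, rmorphD, rmorphXn) /= numqE.
  apply/eqP; rewrite -subr_eq0; apply/eqP.
  by rewrite -[RHS](mulr0 ((denq z)%:~R ^+ 3)) -hz; ring.
have : (denq z %| numq z ^+ 3 * 1)%Z by rewrite mulr1 hnd dvdz_mulr.
rewrite Gauss_dvdzr ?dvdz1 => [/eqP -> //|].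
by apply/coprimezXr; rewrite coprimez_sym; exact: coprime_num_den.
Qed.

Lemma cubic_no_int_root (z : int) : z ^+ 3 - 54 * z - 153 != 0.
Proof.
apply/eqP => hz.
have /dvdzP [w defz] : (3 %| z)%Z.
  have : (3 %| z ^+ 3)%Z.
    have -> : z ^+ 3 = 3 * (18 * z + 51).
      by apply/eqP; rewrite -subr_eq0 -hz; apply/eqP; ring.
    exact: dvdz_mulr (dvdzz 3).
  by rewrite !dvdzE abszX Euclid_dvdX // => /andP [].
rewrite defz in hz; lia.
Qed.

Lemma cubic_no_rat_root (x : rat) : 192 * x ^+ 3 - 72 * x - 17 != 0.
Proof.
apply/negP => /eqP hx.
have hz : (12 * x) ^+ 3 + (-54)%:~R * (12 * x) + (-153)%:~R = 0.
  by rewrite -[RHS](mulr0 9) -hx; ring.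
have /intrP [z defz] : 12 * x \is a Num.int by apply: int_root_depressed_cubic hz.
have /negP := cubic_no_int_root z; apply; apply/eqP; apply: (@intr_inj rat).
by rewrite !(rmorphB, rmorphM, rmorphXn) rmorph0 /= -defz -[RHS]hz; ring.
Qed.

Lemma order3_tate3_velu0 {b P} : b != 0 ->
  order3 (tate3_velu 0 b) P -> exists c, b = c ^+ 3.
Proof.
move=> hb; case: P => [[x y] /order3P [hon _ hpsi] | [_ []]] //.
have den2 : tangent_den (tate3_velu 0 b) x y ^+ 2 = 4 * x ^+ 3 - 27 * b ^+ 2.
  by rewrite (tangent_den_sqr hon) /b2 /b4 /b6 /=; ring.
have hx : x != 0.
  apply/negP => /eqP x0.
  have := sqr_ge0 (tangent_den (tate3_velu 0 b) x y).
  rewrite den2 x0 expr0n mulr0 add0r.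
  have : 0 < b ^+ 2 by rewrite exprn_even_gt0.
  lra.
have x3 : x ^+ 3 = 27 * b ^+ 2.
  have : 3 * x * (x ^+ 3 - 27 * b ^+ 2) = 0.
    by rewrite -hpsi /psi3 /b2 /b4 /b6 /b8 /=; ring.
  by move/eqP; rewrite !mulf_eq0 (negbTE hx) orbF subr_eq0 => /eqP.
by exists (3 * b / x); rewrite expr_div_n x3; field.
Qed.

Lemma no_order3_tate3_velu_unit P : ~ order3 (tate3_velu 1 (24^-1)) P.
Proof.
case: P => [[x y] /order3P [hon _ hpsi] | [_ []]] //.
have den2 : tangent_den (tate3_velu 1 (24^-1)) x y ^+ 2
    = 4 * x ^+ 3 + x ^+ 2 - 3 / 4 * x - 123 / 576.
  by rewrite (tangent_den_sqr hon) /b2 /b4 /b6 /=; field.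
have : (3 * x + 1) * (192 * x ^+ 3 - 72 * x - 17) = 0.
  by rewrite -[RHS](mulr0 (192 : rat)) -hpsi /psi3 /b2 /b4 /b6 /b8 /=; field.
move/eqP; rewrite mulf_eq0 (negbTE (cubic_no_rat_root x)) orbF => /eqP hx.
have x_eq : x = - 3^-1 by lra.
have : tangent_den (tate3_velu 1 (24^-1)) x y ^+ 2 = - 1728^-1.
  by rewrite den2 x_eq; field.
have := sqr_ge0 (tangent_den (tate3_velu 1 (24^-1)) x y).
lra.
Qed.

Lemma no_order3_tate3_velu24 {a P} : a != 0 -> ~ order3 (tate3_velu a (a ^+ 3 / 24)) P.
Proof.
move=> ha hP.
have iso : isoQ (tate3_velu a (a ^+ 3 / 24)) (tate3_velu 1 24^-1).
  apply/isoQ_chg; exists a, 0, 0, 0; split; first exact: ha.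
  by rewrite /chg_curve /=; congr WCurve; field.
have [Q] := (isoQ_has_order3 iso).1 (ex_intro _ P hP).
exact: no_order3_tate3_velu_unit.
Qed.

Lemma tate3_j0 {a b} : elliptic (tate3 a b) -> jinv (tate3 a b) = 0 ->
  b != 0 /\ a * (a ^+ 3 - 24 * b) = 0.
Proof.
rewrite /elliptic /jinv => hD /eqP.
rewrite mulf_eq0 invr_eq0 (negbTE hD) orbF expf_eq0 /= => /eqP c4_0.
split; last by rewrite -c4_0 /c4 /b2 /b4 /=; ring.
apply: contraNneq hD => b0.
by rewrite /disc /b2 /b4 /b6 /b8 /= b0; apply/eqP; ring.
Qed.

Lemma E7_order3 : order3 E7 (Some (3, 4)).
Proof.
by apply/order3P; rewrite /on_curve /tangent_den /psi3 /b2 /b4 /b6 /b8 /=; split; [ring | | ring].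
Qed.

Lemma tate3_quotient_order3 a b : b != 0 -> a * (a ^+ 3 - 24 * b) = 0 ->
  (exists P, order3 (tate3_velu a b) P) <-> isoQ (tate3 a b) E0 /\ isoQ (tate3_velu a b) E7.
Proof.
move=> hb hab; split=> [[P hP] | [_ isoE7]]; last first.
  by apply/(isoQ_has_order3 isoE7); exists (Some (3, 4)); exact: E7_order3.
have a0 : a = 0.
  apply/eqP; apply: contraT => ha.
  have defb : b = a ^+ 3 / 24.
    by move/eqP: hab; rewrite mulf_eq0 (negbTE ha) /= => /eqP; lra.
  by rewrite defb in hP; case: (no_order3_tate3_velu24 ha hP).
subst a; have [c defb] := order3_tate3_velu0 hb hP; subst b.
have hc : c != 0 by apply: contraNneq hb => ->; rewrite exprS mul0r.
by split; apply/isoQ_chg; exists c, 0, 0, 0;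
  (split; [exact: hc | rewrite /chg_curve /=; congr WCurve; ring]).
Qed.

Lemma isoQ_E7_E27a3 : isoQ E7 E27a3.
Proof.
apply/isoQ_chg; exists 4^-1, 3, 3, 4; split; first by [].
by rewrite /chg_curve /=; congr WCurve; field.
Qed.

Theorem proposition4p3 :
  (forall (E : wcurve) (P : point),
     elliptic E -> jinv E = 0 -> order3 E P ->
     ((exists Q : point, order3 (velu3 E P) Q) <->
      (isoQ E E0 /\ isoQ (velu3 E P) E7)))
  /\ isoQ E7 E27a3.
Proof.
split; last exact: isoQ_E7_E27a3.
move=> E P hE hj hP.
have [a [b [isoE isoV]]] := tate3_normal_form hP.
have [hb hab] := tate3_j0 (isoQ_elliptic isoE hE) (etrans (esym (isoQ_jinv isoE)) hj).
rewrite (isoQ_has_order3 isoV) (isoQ_transl isoE) (isoQ_transl isoV).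
exact: tate3_quotient_order3.
Qed.
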